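(* For any real $R\ge 1$, there exists an $R$-competitive incremental algorithm for frequency allocation in bipartite graphs if and only if there exists an $R$-competitive F-system.
   Context: Frequency allocation: a (possibly infinite) undirected graph $G$ is given. Requests arrive one at a time, each at some vertex. An incremental algorithm must, on arrival of each request, immediately and irrevocably assign it a frequency (a positive integer). After every step, for the current loads $\ell_v$ (number of requests that have arrived at vertex $v$), letting $L_v$ be the set of frequencies assigned to requests at $v$: all $\ell_v$ requests at $v$ have distinct frequencies (so $|L_v|=\ell_v$), and $L_v\cap L_w=\emptyset$ for every edge $(v,w)$. The cost is the number of distinct frequencies used, $|\bigcup_v L_v|$. ${\textit{opt}}(G,\bar\ell)$ denotes the minimum of $|\bigcup_v L_v|$ over all assignments of sets $L_v$ of positive integers with $|L_v|=\ell_v$ and $L_v\cap L_w=\emptyset$ for every edge $(v,w)$. An incremental algorithm is $R$-competitive for bipartite graphs if there is a constant $\lambda$ such that for every bipartite graph $G$ and every request sequence, the number of frequencies used is at most $R\cdot{\textit{opt}}(G,\bar\ell)+\lambda$, where $\bar\ell$ is the load vector of the sequence. F-system: a family $\mathcal F=\{F^c_{t,k}\}$ of sets of positive integers, indexed by $c\in\{A,B\}$ and integers $0<k\le t$, such that (F1) $|F^c_{t,k}|\ge k$ for all $c,t,k$; and (F2) $F^A_{t,k}\cap F^B_{t',k'}=\emptyset$ for all $k\le t$, $k'\le t'$ with $k+k'\le\max(t,t')$. An F-system is $R$-competitive if there is a constant $\lambda$ (independent of $t$) such that for every positive integer $t$, $\left|\bigcup_{c\in\{A,B\}}\bigcup_{0<\kappa\le\tau\le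 t}F^c_{\tau,\kappa}\right|\le Rt+\lambda$. *)

From Stdlib Require Import Reals List Arith.
Import ListNotations.
Open Scope R_scope.

(* A (possibly infinite) undirected graph: a vertex type with a symmetric
   adjacency relation. *)
Definition symmetric_rel {V : Type} (adj : V -> V -> Prop) : Prop :=
  forall v w, adj v w -> adj w v.

Definition bipartite {V : Type} (adj : V -> V -> Prop) : Prop :=
  exists col : V -> bool, forall v w, adj v w -> col v <> col w.

(* occ v s n : vertex v occurs exactly n times in the request sequence s,
   i.e. the load of v is n. *)
Inductive occ {V : Type} (v : V) : list V -> nat -> Prop :=
| occ_nil : occ v [] 0
| occ_hit : forall l n, occ v l n -> occ v (v :: l) (S n)
| occ_miss : forall w l n, w <> v -> occ v l n -> occ v (w :: l) n.

(* Sets L_v (given as duplicate-free lists) of positive integers with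
   |L_v| = load of v, disjoint across edges, whose union has exactly k
   elements. *)
Definition feasible {V : Type} (adj : V -> V -> Prop) (s : list V) (k : nat)
  : Prop :=
  exists L : V -> list nat,
    (forall v, NoDup (L v)) /\
    (forall v n, occ v s n -> length (L v) = n) /\
    (forall v x, In x (L v) -> (0 < x)%nat) /\
    (forall v w x, adj v w -> In x (L v) -> In x (L w) -> False) /\
    (exists U : list nat, NoDup U /\ length U = k /\
        forall x, (exists v, In x (L v)) <-> In x U).

Definition is_opt {V : Type} (adj : V -> V -> Prop) (s : list V) (k : nat)
  : Prop :=
  feasible adj s k /\ forall k', feasible adj s k' -> (k <= k')%nat.

(* A (deterministic) incremental algorithm knows the graph G and, on arrival
   of a request, sees the sequence of request vertices so far (the last
   element being the new request) and returns the frequency of the new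
   request.  Earlier assignments are irrevocable since they are determined
   by the prefixes. *)
Definition algorithm : Type :=
  forall (V : Type), (V -> V -> Prop) -> list V -> nat.

(* frequency assigned to the i-th request (0-based) of s *)
Definition freq (alg : algorithm) {V : Type} (adj : V -> V -> Prop)
  (s : list V) (i : nat) : nat :=
  alg V adj (firstn (S i) s).

(* validity after every step (checking all sequences covers all prefixes) *)
Definition valid_run (alg : algorithm) {V : Type} (adj : V -> V -> Prop)
  (s : list V) : Prop :=
  (forall i, (i < length s)%nat -> (0 < freq alg adj s i)%nat) /\
  (forall i j v w, i <> j -> nth_error s i = Some v -> nth_error s j = Some w ->
     v = w -> freq alg adj s i <> freq alg adj s j) /\
  (forall i j v w, nth_error s i = Some v -> nth_error s j = Some w ->
     adj v w -> freq alg adj s i <> freq alg adj s j).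

Definition cost (alg : algorithm) {V : Type} (adj : V -> V -> Prop)
  (s : list V) : nat :=
  length (nodup Nat.eq_dec (map (freq alg adj s) (seq 0 (length s)))).

Definition valid_on_bipartite (alg : algorithm) : Prop :=
  forall (V : Type) (adj : V -> V -> Prop),
    symmetric_rel adj -> bipartite adj -> forall s : list V, valid_run alg adj s.

Definition alg_competitive (R : R) (alg : algorithm) : Prop :=
  exists lam : Rdefinitions.R,
    forall (V : Type) (adj : V -> V -> Prop),
      symmetric_rel adj -> bipartite adj ->
      forall (s : list V) (k : nat), is_opt adj s k ->
        INR (cost alg adj s) <= R * INR k + lam.

Inductive side := SA | SB.

(* F c t k : the set F^c_{t,k} (as a predicate on nat); only indices with
   0 < k <= t are meaningful. *)
Definition fsys_family : Type := side -> nat -> nat -> nat -> Prop.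

Definition is_fsystem (F : fsys_family) : Prop :=
  (forall c t k x, (0 < k <= t)%nat -> F c t k x -> (0 < x)%nat) /\
  (forall c t k, (0 < k <= t)%nat ->
     exists l : list nat, NoDup l /\ (k <= length l)%nat /\ Forall (F c t k) l) /\
  (forall t k t' k' x, (0 < k <= t)%nat -> (0 < k' <= t')%nat ->
     (k + k' <= Nat.max t t')%nat -> F SA t k x -> F SB t' k' x -> False).

Definition fsys_union (F : fsys_family) (t x : nat) : Prop :=
  exists c tau kappa, (0 < kappa <= tau)%nat /\ (tau <= t)%nat /\ F c tau kappa x.

Definition fsys_competitive (R : R) (F : fsys_family) : Prop :=
  exists lam : Rdefinitions.R,
    forall t : nat, (0 < t)%nat ->
      forall l : list nat, NoDup l -> Forall (fsys_union F t) l ->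
        INR (length l) <= R * INR t + lam.

(* An F-system is what an algorithm produces on one universal instance, and
   conversely an F-system can be played greedily.

   Given an algorithm, take the bipartite graph on the indices (c, t, k) in
   which (c, t, k) and (c', t', k') are adjacent iff c <> c' and
   k + k' <= max t t', i.e. iff (F2) asks F^c_{t,k} and F^c'_{t',k'} to be
   disjoint.  Load every (c, tau, k) with 0 < k <= tau <= t by k requests; these
   sequences extend one another as t grows and their optimum is at most t
   (side A uses [1, k], side B uses [t+1-k, t]).  Letting F^c_{t,k} be the
   frequencies assigned at (c, t, k) on the sequence for t, validity gives (F1) and (F2), and every
   element of the union up to t is used on the sequence of optimum <= t.

   Given an F-system, serve the k-th request at a vertex x of colour c by a
   frequency of F^c_{t,k} not yet used at x, where t is the maximum of k and
   of k + l_w over the neighbours w of x.  Both k and t are lower bounds on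
   opt, and for adjacent requests the later one's t is at least the sum of the
   two k's, so (F2) separates them. *)

From Stdlib Require Import Reals List Lia Lra Classical ClassicalEpsilon Wf_nat.
Import ListNotations.
Open Scope R_scope.
Local Open Scope nat_scope.

Lemma exists_not_in_of_length_lt {A} (l m : list A) :
  NoDup l -> length m < length l -> exists x, In x l /\ ~ In x m.
Proof.
  intros Hl Hlen. apply NNPP. intros Hno.
  assert (Hincl : incl l m).
  { intros x Hx. apply NNPP. intros Hxm. apply Hno. eauto. }
  pose proof (NoDup_incl_length Hl Hincl). lia.
Qed.

Lemma le_list_max n l : In n l -> n <= list_max l.
Proof.
  intros Hn. pose proof (proj1 (list_max_le l _) (Nat.le_refl _)) as Hall.
  rewrite Forall_forall in Hall. auto.
Qed.

Lemma freq_app (alg : algorithm) {V} (adj : V -> V -> Prop) (p q : list V) i :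
  i < length p -> freq alg adj (p ++ q) i = freq alg adj p i.
Proof.
  intros Hi. unfold freq. rewrite firstn_app.
  replace (S i - length p) with 0 by lia. simpl. now rewrite app_nil_r.
Qed.

Lemma fsystem_disjoint F c c' t k t' k' x :
  is_fsystem F -> c <> c' -> 0 < k <= t -> 0 < k' <= t' ->
  k + k' <= Nat.max t t' -> F c t k x -> F c' t' k' x -> False.
Proof.
  intros (_ & _ & HF2) Hc Hk Hk' Hkk' Hx Hx'.
  destruct c, c'; try congruence.
  - exact (HF2 t k t' k' x Hk Hk' Hkk' Hx Hx').
  - apply (HF2 t' k' t k x); auto. rewrite Nat.max_comm. lia.
Qed.

Lemma is_opt_exists_le {V} (adj : V -> V -> Prop) s k :
  feasible adj s k -> exists k0, is_opt adj s k0 /\ k0 <= k.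
Proof.
  intros Hk.
  destruct (dec_inh_nat_subset_has_unique_least_element (feasible adj s))
    as (k0 & [Hk0 Hmin] & _); [intros n; apply classic | eauto |].
  exists k0. repeat split; auto.
Qed.

Section Loads.
Context {V : Type}.
Implicit Types (v w : V) (s p q : list V).

Definition load v s : nat :=
  count_occ (fun x y : V => excluded_middle_informative (x = y)) s v.

Lemma load_app v p q : load v (p ++ q) = load v p + load v q.
Proof. apply count_occ_app. Qed.

Lemma load_cons_self v s : load v (v :: s) = S (load v s).
Proof. now apply count_occ_cons_eq. Qed.

Lemma load_rev v s : load v (rev s) = load v s.
Proof. apply count_occ_rev. Qed.

Lemma load_repeat v w n :
  load v (repeat w n) = if excluded_middle_informative (w = v) then n else 0.
Proof.
  destruct (excluded_middle_informative (w = v)) as [<-|Hne].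
  - now apply count_occ_repeat_eq.
  - apply count_occ_repeat_neq. congruence.
Qed.

Lemma occ_load v s : occ v s (load v s).
Proof.
  induction s as [|w s IH]; [constructor|].
  unfold load; simpl. destruct (excluded_middle_informative (w = v)) as [<-|Hne].
  - now constructor.
  - now constructor.
Qed.

Lemma occ_load_eq v s n : occ v s n -> n = load v s.
Proof.
  induction 1 as [|s n _ IH|w s n Hw _ IH].
  - reflexivity.
  - rewrite load_cons_self. congruence.
  - unfold load. rewrite count_occ_cons_neq by auto. exact IH.
Qed.

Lemma exists_positions s v :
  exists l, NoDup l /\ length l = load v s /\
    forall i, In i l -> nth_error s i = Some v.
Proof.
  induction s as [|w s (l & Hnd & Hlen & Hpos)].
  - exists []. repeat split; [constructor | intros i []].
  - assert (Hnd' : NoDup (map S l)).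
    { apply NoDup_map_NoDup_ForallPairs; auto. intros i j _ _. congruence. }
    assert (Hpos' : forall i, In i (map S l) -> nth_error (w :: s) i = Some v).
    { intros i Hi. apply in_map_iff in Hi as (j & <- & Hj). exact (Hpos j Hj). }
    unfold load; simpl. destruct (excluded_middle_informative (w = v)) as [<-|Hne].
    + exists (0 :: map S l). repeat split.
      * constructor; auto. intros Hin. apply in_map_iff in Hin as (j & ? & _). lia.
      * simpl. now rewrite length_map, Hlen.
      * intros i [<-|Hi]; auto.
    + exists (map S l). repeat split; auto. now rewrite length_map.
Qed.

Lemma feasible_load_le (adj : V -> V -> Prop) s k v :
  feasible adj s k -> load v s <= k.
Proof.
  intros (L & Hnd & Hlen & _ & _ & U & HU & <- & HUi).
  rewrite <- (Hlen v _ (occ_load v s)).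
  apply NoDup_incl_length; auto. intros x Hx. apply HUi. eauto.
Qed.

Lemma feasible_edge_load_le (adj : V -> V -> Prop) s k v w :
  feasible adj s k -> adj v w -> load v s + load w s <= k.
Proof.
  intros (L & Hnd & Hlen & _ & Hdis & U & HU & <- & HUi) Hvw.
  rewrite <- (Hlen v _ (occ_load v s)), <- (Hlen w _ (occ_load w s)), <- length_app.
  apply NoDup_incl_length.
  - apply NoDup_app; auto. intros x Hv Hw. exact (Hdis v w x Hvw Hv Hw).
  - intros x Hx. apply HUi. apply in_app_or in Hx as [Hx|Hx]; eauto.
Qed.

End Loads.

Section Greedy.
Variable F : fsys_family.

Definition two_colouring {V} (adj : V -> V -> Prop) : V -> bool :=
  epsilon (inhabits (fun _ => true)) (fun col => forall v w, adj v w -> col v <> col w).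

Lemma two_colouring_spec {V} (adj : V -> V -> Prop) : bipartite adj ->
  forall v w, adj v w -> two_colouring adj v <> two_colouring adj w.
Proof. intros Hbip. exact (epsilon_spec _ _ Hbip). Qed.

Definition side_of (b : bool) : side := if b then SA else SB.

Lemma side_of_inj_neq b b' : b <> b' -> side_of b <> side_of b'.
Proof. destruct b, b'; simpl; congruence. Qed.

Definition request_level {V} (adj : V -> V -> Prop) (x : V) (p : list V) : nat :=
  list_max (S (load x p) :: map (fun w => if excluded_middle_informative (adj x w)
                                         then S (load x p) + load w p else 0) p).

Lemma request_level_ge_load {V} (adj : V -> V -> Prop) x p :
  S (load x p) <= request_level adj x p.
Proof. apply le_list_max. now left. Qed.

Lemma request_level_ge_edge {V} (adj : V -> V -> Prop) x w p :
  In w p -> adj x w -> S (load x p) + load w p <= request_level adj x p.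
Proof.
  intros Hw Hxw. apply le_list_max. right. apply in_map_iff. exists w. split; auto.
  destruct (excluded_middle_informative (adj x w)); [reflexivity | contradiction].
Qed.

Lemma request_level_le_feasible {V} (adj : V -> V -> Prop) x p q k :
  feasible adj (p ++ x :: q) k -> request_level adj x p <= k.
Proof.
  intros Hfeas. apply list_max_le. constructor.
  - pose proof (feasible_load_le adj _ k x Hfeas) as Hx.
    rewrite load_app, load_cons_self in Hx. lia.
  - apply Forall_forall. intros n Hn. apply in_map_iff in Hn as (w & <- & _).
    destruct (excluded_middle_informative (adj x w)) as [Hxw|]; [|lia].
    pose proof (feasible_edge_load_le adj _ k x w Hfeas Hxw) as Hxw_load.
    rewrite !load_app, load_cons_self in Hxw_load. lia.
Qed.

Definition used_at {V} (x : V) (h : list (V * nat)) : list nat :=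
  map snd (filter (fun e => if excluded_middle_informative (fst e = x) then true else false) h).

Lemma length_used_at {V} (x : V) h : length (used_at x h) = load x (map fst h).
Proof.
  unfold used_at, load. induction h as [|[w f] h IH]; simpl; auto.
  destruct (excluded_middle_informative (w = x)); simpl; auto.
Qed.

Lemma in_used_at {V} (x : V) f h : In (x, f) h -> In f (used_at x h).
Proof.
  intros Hxf. apply in_map_iff. exists (x, f). split; auto.
  apply filter_In. split; auto. simpl.
  destruct (excluded_middle_informative (x = x)); congruence.
Qed.

Definition greedy_choice {V} (adj : V -> V -> Prop) (x : V) (p : list V)
    (h : list (V * nat)) : nat :=
  epsilon (inhabits 0) (fun f =>
    F (side_of (two_colouring adj x)) (request_level adj x p) (S (load x p)) f /\
    ~ In f (used_at x h)).

(* The assignments made so far, most recent first. *)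
Fixpoint history_rev {V} (adj : V -> V -> Prop) (r : list V) : list (V * nat) :=
  match r with
  | [] => []
  | x :: r' => (x, greedy_choice adj x (rev r') (history_rev adj r')) :: history_rev adj r'
  end.

Definition history {V} (adj : V -> V -> Prop) (p : list V) := history_rev adj (rev p).

Definition greedy : algorithm := fun V adj p =>
  match history adj p with
  | [] => 0
  | (_, f) :: _ => f
  end.

Lemma history_snoc {V} (adj : V -> V -> Prop) p x :
  history adj (p ++ [x]) = (x, greedy_choice adj x p (history adj p)) :: history adj p.
Proof. unfold history. rewrite rev_app_distr. simpl. now rewrite rev_involutive. Qed.

Lemma history_app {V} (adj : V -> V -> Prop) p q :
  exists h, history adj (p ++ q) = h ++ history adj p.
Proof.
  induction q as [|x q [h Hh]] using rev_ind.
  - exists []. now rewrite app_nil_r.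
  - rewrite app_assoc, history_snoc, Hh. eexists. now rewrite app_comm_cons.
Qed.

Lemma map_fst_history {V} (adj : V -> V -> Prop) p : map fst (history adj p) = rev p.
Proof.
  induction p as [|x p IH] using rev_ind; [reflexivity|].
  rewrite history_snoc, rev_app_distr. simpl. now rewrite IH.
Qed.

Lemma freq_greedy {V} (adj : V -> V -> Prop) p v q :
  freq greedy adj (p ++ v :: q) (length p) = greedy_choice adj v p (history adj p).
Proof.
  unfold freq, greedy. replace (S (length p)) with (length p + 1) by lia.
  rewrite firstn_app_2. simpl. now rewrite history_snoc.
Qed.

Lemma greedy_choice_spec {V} (adj : V -> V -> Prop) x p : is_fsystem F ->
  F (side_of (two_colouring adj x)) (request_level adj x p) (S (load x p))
    (greedy_choice adj x p (history adj p)) /\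
  ~ In (greedy_choice adj x p (history adj p)) (used_at x (history adj p)).
Proof.
  intros (_ & HF1 & _). unfold greedy_choice. apply epsilon_spec.
  destruct (HF1 (side_of (two_colouring adj x)) (request_level adj x p) (S (load x p)))
    as (l & Hnd & Hlen & Hl).
  { pose proof (request_level_ge_load adj x p). lia. }
  destruct (exists_not_in_of_length_lt l (used_at x (history adj p)) Hnd) as (f & Hf & Hnew).
  { rewrite length_used_at, map_fst_history, load_rev. lia. }
  exists f. rewrite Forall_forall in Hl. auto.
Qed.

Section Validity.
Variable V : Type.
Variable adj : V -> V -> Prop.
Hypothesis HF : is_fsystem F.
Hypothesis Hsym : symmetric_rel adj.
Hypothesis Hbip : bipartite adj.

Lemma greedy_separates p r q v w : v = w \/ adj w v ->
  freq greedy adj (p ++ v :: r ++ w :: q) (length p) <>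
  freq greedy adj (p ++ v :: r ++ w :: q) (length (p ++ v :: r)).
Proof.
  intros Hvw. rewrite freq_greedy.
  set (p' := p ++ v :: r).
  replace (p ++ v :: r ++ w :: q) with (p' ++ w :: q)
    by (unfold p'; now rewrite <- app_assoc).
  rewrite freq_greedy.
  assert (Hhist : exists h,
    history adj p' = h ++ (v, greedy_choice adj v p (history adj p)) :: history adj p).
  { destruct (history_app adj (p ++ [v]) r) as [h Hh]. exists h.
    unfold p'. replace (p ++ v :: r) with ((p ++ [v]) ++ r) by now rewrite <- app_assoc.
    now rewrite Hh, history_snoc. }
  destruct Hhist as [h Hhist].
  destruct (greedy_choice_spec adj w p' HF) as [Hw Hw_new].
  destruct (greedy_choice_spec adj v p HF) as [Hv _].
  intros Heq. destruct Hvw as [<- | Hwv].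
  - apply Hw_new. rewrite <- Heq, Hhist. apply in_used_at, in_or_app. right. now left.
  - rewrite <- Heq in Hw.
    assert (Hlevel : S (load w p') + load v p' <= request_level adj w p').
    { apply request_level_ge_edge; auto. unfold p'. apply in_or_app. right. now left. }
    assert (Hload_v : S (load v p) <= load v p').
    { unfold p'. rewrite load_app, load_cons_self. lia. }
    pose proof (request_level_ge_load adj w p').
    pose proof (request_level_ge_load adj v p).
    refine (fsystem_disjoint F _ _ _ _ _ _ _ HF _ _ _ _ Hw Hv); [|lia..].
    apply side_of_inj_neq, two_colouring_spec; auto.
Qed.

Lemma greedy_separates_nth s i j v w : i < j ->
  nth_error s i = Some v -> nth_error s j = Some w -> v = w \/ adj w v ->
  freq greedy adj s i <> freq greedy adj s j.
Proof.
  intros Hij Hi Hj Hvw.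
  destruct (nth_error_split s j Hj) as (p' & q & -> & <-).
  rewrite nth_error_app1 in Hi by lia.
  destruct (nth_error_split p' i Hi) as (p & r & -> & <-).
  rewrite <- app_assoc. now apply greedy_separates.
Qed.

Lemma greedy_valid s : valid_run greedy adj s.
Proof.
  split; [|split].
  - intros i Hi. destruct (nth_error s i) as [v|] eqn:Hv.
    2: { apply nth_error_Some in Hi. congruence. }
    destruct (nth_error_split s i Hv) as (p & q & -> & <-).
    rewrite freq_greedy. destruct (greedy_choice_spec adj v p HF) as [Hf _].
    destruct HF as (HF0 & _). refine (HF0 _ _ _ _ _ Hf).
    split; [lia | apply request_level_ge_load].
  - intros i j v w Hij Hi Hj Hvw. destruct (Nat.lt_total i j) as [Hlt|[Heq|Hlt]].
    + apply (greedy_separates_nth s i j v w); auto.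
    + contradiction.
    + apply not_eq_sym, (greedy_separates_nth s j i w v); auto.
  - intros i j v w Hi Hj Hvw. destruct (Nat.lt_total i j) as [Hlt|[<-|Hlt]].
    + apply (greedy_separates_nth s i j v w); auto.
    + rewrite Hi in Hj. injection Hj as <-.
      exfalso. exact (two_colouring_spec adj Hbip v v Hvw eq_refl).
    + apply not_eq_sym, (greedy_separates_nth s j i w v); auto.
Qed.

Lemma greedy_freq_in_union s k i : feasible adj s k -> i < length s ->
  fsys_union F k (freq greedy adj s i).
Proof.
  intros Hfeas Hi. destruct (nth_error s i) as [v|] eqn:Hv.
  2: { apply nth_error_Some in Hi. congruence. }
  destruct (nth_error_split s i Hv) as (p & q & -> & <-).
  rewrite freq_greedy. destruct (greedy_choice_spec adj v p HF) as [Hf _].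
  exists (side_of (two_colouring adj v)), (request_level adj v p), (S (load v p)).
  pose proof (request_level_ge_load adj v p).
  pose proof (request_level_le_feasible adj v p q k Hfeas).
  repeat split; auto; lia.
Qed.

End Validity.

Lemma greedy_competitive (R : R) : (0 <= R)%R -> is_fsystem F ->
  fsys_competitive R F -> alg_competitive R greedy.
Proof.
  intros HR HF (lam & Hlam). exists (Rabs lam).
  intros V adj _ _ s k [Hfeas _].
  assert (HRk : (0 <= R * INR k)%R) by (apply Rmult_le_pos; [exact HR | apply pos_INR]).
  pose proof (Rle_abs lam).
  destruct s as [|v s].
  - unfold cost. simpl. pose proof (Rabs_pos lam). lra.
  - assert (Hk : 0 < k).
    { pose proof (feasible_load_le adj _ k v Hfeas) as Hv.
      rewrite load_cons_self in Hv. lia. }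
    unfold cost. eapply Rle_trans; [apply (Hlam k Hk) | lra].
    + apply NoDup_nodup.
    + apply Forall_forall. intros f Hf.
      apply nodup_In, in_map_iff in Hf as (i & <- & Hi). apply in_seq in Hi.
      apply greedy_freq_in_union; auto. lia.
Qed.

End Greedy.

Notation findex := (side * nat * nat)%type.

Definition findex_adj (x y : findex) : Prop :=
  let '(c, t, k) := x in
  let '(c', t', k') := y in
  c <> c' /\ 0 < k <= t /\ 0 < k' <= t' /\ k + k' <= Nat.max t t'.

Lemma findex_adj_sym : symmetric_rel findex_adj.
Proof.
  intros [[c t] k] [[c' t'] k'] (Hc & Hk & Hk' & Hkk'). simpl.
  repeat split; try lia. congruence.
Qed.

Lemma findex_adj_bipartite : bipartite findex_adj.
Proof.
  exists (fun x : findex => match x with (SA, _, _) => true | _ => false end).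
  intros [[c t] k] [[c' t'] k'] (Hc & _). destruct c, c'; congruence.
Qed.

Fixpoint block (t m : nat) : list findex :=
  match m with
  | 0 => []
  | S m' => block t m' ++ repeat (SA, t, m) m ++ repeat (SB, t, m) m
  end.

Fixpoint requests (t : nat) : list findex :=
  match t with
  | 0 => []
  | S t' => requests t' ++ block t t
  end.

Lemma load_block t m c tau k :
  load (c, tau, k) (block t m) =
  if excluded_middle_informative (tau = t /\ 0 < k <= m) then k else 0.
Proof.
  induction m as [|m IH]; cbn [block].
  - destruct (excluded_middle_informative _); [lia | reflexivity].
  - rewrite !load_app, !load_repeat, IH.
    destruct (Nat.eq_dec tau t) as [->|Ht]; destruct (Nat.eq_dec k (S m)) as [->|Hk];
      destruct c; repeat destruct (excluded_middle_informative _); try lia; congruence.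
Qed.

Lemma load_requests t c tau k :
  load (c, tau, k) (requests t) =
  if excluded_middle_informative (0 < k <= tau /\ tau <= t) then k else 0.
Proof.
  induction t as [|t IH]; cbn [requests].
  - destruct (excluded_middle_informative _); [lia | reflexivity].
  - rewrite load_app, IH, load_block.
    repeat destruct (excluded_middle_informative _); lia.
Qed.

Lemma load_requests_le t v : load v (requests t) <= t.
Proof.
  destruct v as [[c tau] k]. rewrite load_requests.
  destruct (excluded_middle_informative _); lia.
Qed.

Lemma load_requests_edge t v w : findex_adj v w ->
  load v (requests t) + load w (requests t) <= t.
Proof.
  destruct v as [[c tau] k], w as [[c' tau'] k']. intros (_ & Hk & Hk' & Hkk').
  rewrite !load_requests. repeat destruct (excluded_middle_informative _); lia.
Qed.

Lemma requests_prefix tau t : tau <= t -> exists r, requests t = requests tau ++ r.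
Proof.
  induction 1 as [|t _ [r Hr]].
  - exists []. now rewrite app_nil_r.
  - simpl. rewrite Hr. eexists. now rewrite <- app_assoc.
Qed.

Definition packing (t : nat) (v : findex) : list nat :=
  let n := load v (requests t) in
  match v with
  | (SA, _, _) => seq 1 n
  | (SB, _, _) => seq (S t - n) n
  end.

Lemma packing_bounds t v x : In x (packing t v) -> 1 <= x <= t.
Proof.
  pose proof (load_requests_le t v).
  destruct v as [[[|] tau] k]; cbv beta iota zeta delta [packing];
    intros Hx; apply in_seq in Hx; lia.
Qed.

Lemma feasible_requests t : feasible findex_adj (requests t) t.
Proof.
  exists (packing t). repeat split.
  - intros [[[|] tau] k]; apply seq_NoDup.
  - intros v n Hn. rewrite (occ_load_eq v _ n Hn).
    destruct v as [[[|] tau] k]; apply length_seq.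
  - intros v x Hx. apply (packing_bounds t v x Hx).
  - intros v w x Hvw Hv Hw. pose proof (load_requests_edge t v w Hvw) as Hsum.
    destruct v as [[[|] tau] k], w as [[[|] tau'] k']; destruct Hvw as [Hc _];
      try congruence; cbv beta iota zeta delta [packing] in Hv, Hw;
      apply in_seq in Hv; apply in_seq in Hw; lia.
  - exists (seq 1 t). repeat split.
    + apply seq_NoDup.
    + apply length_seq.
    + intros (v & Hx). apply in_seq. pose proof (packing_bounds t v x Hx). lia.
    + intros Hx. apply in_seq in Hx. exists (SA, t, t).
      cbv beta iota zeta delta [packing]. rewrite load_requests.
      destruct (excluded_middle_informative _); [apply in_seq | exfalso]; lia.
Qed.

Section FSystemOfAlgorithm.
Variable alg : algorithm.

Definition alg_fsystem : fsys_family := fun c t k f =>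
  exists i, nth_error (requests t) i = Some (c, t, k) /\
            freq alg findex_adj (requests t) i = f.

Lemma alg_fsystem_lift c tau k f t : tau <= t -> alg_fsystem c tau k f ->
  exists i, nth_error (requests t) i = Some (c, tau, k) /\
            freq alg findex_adj (requests t) i = f.
Proof.
  intros Htau (i & Hi & Hf). destruct (requests_prefix tau t Htau) as [r Hr].
  assert (Hlt : i < length (requests tau)) by (apply nth_error_Some; congruence).
  exists i. rewrite Hr, nth_error_app1, freq_app by exact Hlt. auto.
Qed.

Lemma alg_fsystem_is_fsystem :
  (forall s, valid_run alg findex_adj s) -> is_fsystem alg_fsystem.
Proof.
  intros Hvalid. split; [|split].
  - intros c t k f _ (i & Hi & <-). apply (proj1 (Hvalid (requests t))).
    apply nth_error_Some. congruence.
  - intros c t k Hk. destruct (exists_positions (requests t) (c, t, k)) as (l & Hnd & Hlen & Hpos).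
    exists (map (freq alg findex_adj (requests t)) l). repeat split.
    + apply NoDup_map_NoDup_ForallPairs; auto. intros i j Hi Hj Hij.
      destruct (Nat.eq_dec i j) as [|Hne]; auto. exfalso.
      exact (proj1 (proj2 (Hvalid (requests t))) i j _ _ Hne (Hpos i Hi) (Hpos j Hj) eq_refl Hij).
    + rewrite length_map, Hlen, load_requests.
      destruct (excluded_middle_informative _); lia.
    + apply Forall_forall. intros f Hf. apply in_map_iff in Hf as (i & <- & Hi). exists i. split; auto.
  - intros t k t' k' f Hk Hk' Hkk' HA HB.
    destruct (alg_fsystem_lift _ _ _ _ _ (Nat.le_max_l t t') HA) as (i & Hi & Hfi).
    destruct (alg_fsystem_lift _ _ _ _ _ (Nat.le_max_r t t') HB) as (j & Hj & Hfj).
    apply (proj2 (proj2 (Hvalid (requests (Nat.max t t')))) i j _ _ Hi Hj); [|congruence].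
    repeat split; try lia. discriminate.
Qed.

Lemma alg_fsystem_competitive (R : R) : (0 <= R)%R ->
  alg_competitive R alg -> fsys_competitive R alg_fsystem.
Proof.
  intros HR (lam & Hlam). exists lam. intros t _ l Hnd Hl.
  destruct (is_opt_exists_le _ _ _ (feasible_requests t)) as (k & Hopt & Hkt).
  pose proof (Hlam findex findex_adj findex_adj_sym findex_adj_bipartite _ k Hopt) as Hcost.
  assert (Hused : length l <= cost alg findex_adj (requests t)).
  { apply NoDup_incl_length; auto. intros f Hf. rewrite Forall_forall in Hl.
    destruct (Hl f Hf) as (c & tau & kappa & _ & Htau & HF).
    destruct (alg_fsystem_lift c tau kappa f t Htau HF) as (i & Hi & <-).
    apply nodup_In, in_map_iff. exists i. split; auto.
    apply in_seq. assert (i < length (requests t)) by (apply nth_error_Some; congruence). lia. }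
  apply le_INR in Hused. apply le_INR in Hkt.
  assert (HRk : (R * INR k <= R * INR t)%R) by (apply Rmult_le_compat_l; lra).
  lra.
Qed.

End FSystemOfAlgorithm.

Local Close Scope nat_scope.

Theorem lemma1 (R : R) (HR : 1 <= R) :
  (exists alg : algorithm, valid_on_bipartite alg /\ alg_competitive R alg) <->
  (exists F : fsys_family, is_fsystem F /\ fsys_competitive R F).
Proof.
  assert (HR0 : 0 <= R) by lra.
  split.
  - intros (alg & Hvalid & Hcomp). exists (alg_fsystem alg). split.
    + apply alg_fsystem_is_fsystem. intros s.
      apply Hvalid; [apply findex_adj_sym | apply findex_adj_bipartite].
    + now apply alg_fsystem_competitive.
  - intros (F & HF & Hcomp). exists (greedy F). split.
    + intros V adj Hsym Hbip s. now apply greedy_valid.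
    + now apply greedy_competitive.
Qed.
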